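(* For every $J\subseteq[n-1]$, $$\varphi(X^0_J)=2^{1+\#J}\sum_{F\in\mathring{\mathcal{F}}_n,\ F\subseteq J\cup(J+1)}\mathring{P}_F\quad\text{and}\quad\varphi(Y^0_J)=\sum_{F\in\mathring{\mathcal{F}}_n,\ F\subseteq J\triangle(J+1)}2^{1+\#F}\mathring{P}_F.$$
   Context: $B_n$: signed permutations $w=w_1\dots w_n$, values ordered $\cdots<-2<-1<1<2<\cdots$, $w_0=0$; $\mathrm{Des}(w)=\{i\in\{0,\dots,n-1\}:w_i>w_{i+1}\}$; $Y_J=\sum_{\mathrm{Des}(w)=J}w$, $X_J=\sum_{\mathrm{Des}(w)\subseteq J}w$. For $J\subseteq[n-1]$, $X^0_J=X_{\{0\}\cup J}$ and $Y^0_J=Y_{\{0\}\cup J}+Y_J$. $\varphi$: linear extension of $w\mapsto|w_1|\dots|w_n|$. For $u\in\mathfrak{S}_n$, $\mathring{\mathrm{Peak}}(u)=\{i\in\{2,\dots,n-1\}:u_{i-1}<u_i>u_{i+1}\}$; $\mathring{\mathcal{F}}_n$ is the set of subsets of $\{2,\dots,n-1\}$ with no two consecutive integers; $\mathring{P}_F=\sum_{\mathring{\mathrm{Peak}}(u)=F}u$. $J+1=\{j+1:j\in J\}$, $\triangle$ = symmetric difference. *)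

From mathcomp Require Import all_boot all_order all_algebra all_fingroup.
Set Implicit Arguments. Unset Strict Implicit. Unset Printing Implicit Defensive.
Import Order.TTheory GRing.Theory Num.Theory.
Local Open Scope ring_scope.

(* Signed permutations of B_n: w_i = (-1)^{s i} * (sigma i + 1), i.e. a pair
   (sigma, s) with sigma a permutation of 'I_n and s the sign pattern.
   Position k (1-indexed, 1 <= k <= n) is ordinal k-1. *)
Definition sperm (n : nat) := ({perm 'I_n} * {ffun 'I_n -> bool})%type.

Definition wval n (w : sperm n) (i : 'I_n) : int :=
  (if w.2 i then -1 else 1) * ((w.1 i).+1)%:Z.

Definition wseq n (w : sperm n) : seq int := 0 :: [seq wval w i | i <- enum 'I_n].

(* Des(w) = {i in {0..n-1} : w_i > w_{i+1}}, i represented by the ordinal i *)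
Definition Des n (w : sperm n) : {set 'I_n} :=
  [set i : 'I_n | nth 0 (wseq w) i.+1 < nth 0 (wseq w) i].

(* group algebra elements: coefficient functions *)
Definition Yset n (J : {set 'I_n}) : {ffun sperm n -> int} :=
  [ffun w => ((Des w == J) : nat)%:Z].
Definition Xset n (J : {set 'I_n}) : {ffun sperm n -> int} :=
  [ffun w => ((Des w \subset J) : nat)%:Z].

Definition setZ n (J : {set 'I_n}) : {set 'I_n} :=
  [set i : 'I_n | (val i == 0%N) || (i \in J)].

Definition X0 n (J : {set 'I_n}) := Xset (setZ J).
Definition Y0 n (J : {set 'I_n}) := Yset (setZ J) + Yset J.

(* phi : linear extension of w |-> |w_1| ... |w_n| *)
Definition phi n (X : {ffun sperm n -> int}) : {ffun 'S_n -> int} :=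
  [ffun u : 'S_n => \sum_(w : sperm n | [forall i, `|wval w i| == ((u i).+1)%:Z]) X w].

Definition useq n (u : 'S_n) : seq nat := 0%N :: [seq (u i).+1 | i <- enum 'I_n].

Definition Peak n (u : 'S_n) : {set 'I_n} :=
  [set i : 'I_n | [&& (2 <= i)%N, (i <= n.-1)%N,
     (nth 0%N (useq u) i.-1 < nth 0%N (useq u) i)%N &
     (nth 0%N (useq u) i.+1 < nth 0%N (useq u) i)%N]].

Definition inF n (F : {set 'I_n}) : bool :=
  [forall i in F, (2 <= i)%N && (i <= n.-1)%N] &&
  [forall i in F, forall j in F, val j != (val i).+1].

Definition Pring n (F : {set 'I_n}) : {ffun 'S_n -> int} :=
  [ffun u => ((Peak u == F) : nat)%:Z].

Definition shift1 n (J : {set 'I_n}) : {set 'I_n} :=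
  [set i : 'I_n | [exists j in J, val i == (val j).+1]].

Definition symdiff n (A B : {set 'I_n}) : {set 'I_n} := (A :\: B) :|: (B :\: A).

From mathcomp Require Import all_boot all_order all_algebra all_fingroup.
From mathcomp Require Import zify.
Set Implicit Arguments. Unset Strict Implicit. Unset Printing Implicit Defensive.
Import Order.TTheory GRing.Theory Num.Theory.

(* Fix u in S_n: the signed permutations above u are its 2^n sign vectors s.
   For a position i >= 1, whether i is a descent of (u, s) depends only on
   the sign of the letter of larger absolute value among the two letters
   compared there, so X0_J and Y0_J count the sign vectors taking prescribed
   values on those dominant letters, over the positions i >= 1 outside J
   (resp. all i >= 1; position 0 is unconstrained in both cases).  Two
   positions share a dominant letter exactly when they flank a peak of u.
   Such a count is 0 if two prescriptions on a shared letter disagree, and a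
   power of 2 counting the free letters otherwise.  For X0_J two
   prescriptions on a shared letter always disagree, so the count is nonzero
   iff every peak lies in J ∪ (J+1), and then 2^(1+#J).  For Y0_J they agree iff the peak
   lies in J △ (J+1), and the n-1 positions have n-1-#Peak(u) dominant
   letters, leaving 2^(1+#Peak(u)) free sign vectors. *)

Section PrescribedValues.
Variables (I K : finType) (C : {set K}) (f : K -> I) (b : K -> bool).

Definition prescribed :=
  [pred s : {ffun I -> bool} | [forall k in C, s (f k) == b k]].

Lemma card_prescribed :
  {in C &, forall k k', f k = f k' -> b k = b k'} ->
  #|prescribed| = 2 ^ #|~: (f @: C)|.
Proof.
move=> consistent.
pose F x := [pred c : bool | [forall k in C, (f k == x) ==> (c == b k)]].
have ->: #|prescribed| = #|family F|.
  apply: eq_card => s; rewrite !inE; apply/forallP/familyP => [sP x | sF k].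
    apply/forallP => k; apply/implyP => Ck; apply/implyP => /eqP <-.
    by have /implyP := sP k; apply.
  by apply/implyP => Ck; have /forallP/(_ k) := sF (f k); rewrite Ck eqxx.
rewrite card_family foldrE big_map big_enum /= -prod_nat_const.
rewrite (bigID (mem (f @: C))) /= big1 ?mul1n => [|x /imsetP[k Ck ->]].
  apply: eq_big => [x | x]; first by rewrite in_setC.
  move=> /negbTE fxC; rewrite -[2]card_bool; apply: eq_card => c.
  rewrite unfold_in; apply/forallP => k; apply/implyP => Ck; apply/implyP => /eqP fk.
  by rewrite -fk imset_f in fxC.
rewrite -(card1 (b k)); apply: eq_card => c.
rewrite unfold_in /=; apply/forallP/eqP => [/(_ k)|->{c} k' /=].
  by rewrite Ck eqxx => /eqP.
by apply/implyP => Ck'; apply/implyP => /eqP/(consistent _ _ Ck' Ck)->.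
Qed.

Lemma card_prescribed_eq0 k k' : k \in C -> k' \in C ->
  f k = f k' -> b k != b k' -> #|prescribed| = 0.
Proof.
move=> Ck Ck' fkk' bkk'; apply: eq_card0 => s; apply/negP => /forallP sP.
have /implyP/(_ Ck)/eqP := sP k; have /implyP/(_ Ck')/eqP := sP k'.
by rewrite fkk' => -> bk; rewrite bk eqxx in bkk'.
Qed.

End PrescribedValues.

Lemma sum_indicator (T : finType) (A : {pred T}) :
  (\sum_(x : T) Posz (x \in A))%R = #|A|.
Proof.
rewrite -(big_morph Posz PoszD (erefl (Posz 0))); congr Posz.
by rewrite -sum1_card [RHS]big_mkcond; apply: eq_bigr => x _; case: (x \in A).
Qed.

Lemma signed_lt (a b : nat) (sa sb : bool) : a != b ->
  (((if sb then -1 else 1) * (b.+1)%:Z < (if sa then -1 else 1) * (a.+1)%:Z)%R)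
   = (if a < b then sb else ~~ sa).
Proof.
move=> neq_ab; case: sa; case: sb => /=; rewrite ?mulN1r ?mul1r ?ltrN2 ?ltz_nat ?ltnS.
- by case: (a < b).
- by case: ifP => _; apply/negbTE; rewrite -leNgt; apply: (@le_trans _ _ 0%R); rewrite ?oppr_le0.
- by case: ifP => _; apply: (@lt_le_trans _ _ 0%R); rewrite ?oppr_lt0.
- by case: ltngtP neq_ab.
Qed.

Lemma eq_setU1_add (T : finType) (x : T) (A B : {set T}) : x \notin B ->
  ((A == x |: B) + (A == B))%N = (A :\ x == B).
Proof.
move=> xNB; case: (boolP (x \in A)) => xA.
  have /negbTE->: A != B by apply: contraNneq xNB => <-.
  rewrite addn0; congr nat_of_bool; apply/eqP/eqP => [-> | <-].
    exact: setU1K.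
  by rewrite setD1K.
have /negbTE->: A != x |: B by apply: contraNneq xA => ->; rewrite setU11.
suff ->: A :\ x = A by [].
by apply/setP => y; rewrite in_setD1; case: eqVneq => // ->; rewrite (negbTE xA).
Qed.

Section SignedPermutations.
Variable m : nat.
Implicit Types (u : 'S_m.+1) (s : {ffun 'I_m.+1 -> bool}) (i j : 'I_m.+1)
  (J : {set 'I_m.+1}).

Definition ascent u i := u (inord i.-1) < u i.

(* The ordinal, among [i.-1] and [i], of the letter of larger absolute value;
   its sign decides whether [i \in Des (u, s)]. *)
Definition dominant u i : 'I_m.+1 := if ascent u i then i else inord i.-1.

Lemma inord_pred i : 0 < i -> (inord i.-1 : 'I_m.+1) = i.-1 :> nat.
Proof. by move=> i_gt0; rewrite inordK // (leq_ltn_trans (leq_pred i)). Qed.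

Lemma nth_wseq (w : sperm m.+1) i : nth 0%R (wseq w) i.+1 = wval w i.
Proof.
rewrite /wseq /= (nth_map ord0) ?size_enum_ord //.
by congr wval; apply: val_inj; rewrite /= nth_enum_ord.
Qed.

Lemma nth_useq u k : k < m.+1 -> nth 0 (useq u) k.+1 = (u (inord k)).+1.
Proof.
move=> lt_km; rewrite /useq /= (nth_map ord0) ?size_enum_ord //.
by congr (nat_of_ord (u _)).+1; apply: val_inj; rewrite /= nth_enum_ord ?inordK.
Qed.

Lemma in_Des u s i : 0 < i ->
  (i \in Des ((u, s) : sperm m.+1)) = (s (dominant u i) == ascent u i).
Proof.
move=> i_gt0; rewrite inE nth_wseq.
have ->: val i = (inord i.-1 : 'I_m.+1).+1 by rewrite inord_pred ?prednK.
rewrite nth_wseq /wval /= signed_lt; last first.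
  apply/eqP => /val_inj/perm_inj/(congr1 val)/eqP /=.
  by rewrite inord_pred // ltn_eqF // ltn_predL.
by rewrite /dominant /ascent; case: ifP; case: (s _) => //; case: (s _).
Qed.

Lemma in_Peak u i :
  (i \in Peak u) = (1 < i) && ascent u (inord i.-1) && ~~ ascent u i.
Proof.
rewrite inE [i <= _](ltn_ord i) /ascent; case: i => [[|[|k]] lt_km] //.
have lt1 : k.+1 < m.+1 by apply: ltn_trans lt_km.
have lt0 : k < m.+1 by apply: ltn_trans lt1.
rewrite (nth_useq u lt0) (nth_useq u lt1) (nth_useq u lt_km) /= inordK //.
have ->: Ordinal lt_km = inord k.+2 by apply: val_inj; rewrite /= inordK.
have neq : inord k.+2 != inord k.+1 :> 'I_m.+1.
  by apply/eqP => /(congr1 val); rewrite /= !inordK // => /esym/n_Sn.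
by rewrite !ltnS -leqNgt [X in _ && X]ltn_neqAle (inj_eq (@ord_inj _)) (inj_eq perm_inj) neq.
Qed.

Lemma in_setC0 i : (i \in [set~ ord0]) = (0 < i).
Proof. by rewrite !inE -(inj_eq val_inj) lt0n. Qed.

Lemma Peak_subC0 u : Peak u \subset [set~ ord0].
Proof. by apply/subsetP => i; rewrite in_Peak in_setC0 => /andP[/andP[/ltnW]]. Qed.

Lemma dominant_peak u j : j \in Peak u -> dominant u (inord j.-1) = dominant u j.
Proof. by rewrite in_Peak /dominant => /andP[/andP[_ ->] /negbTE->]. Qed.

Lemma Peak_pred u j : j \in Peak u ->
  (inord j.-1 : 'I_m.+1) \in [set~ ord0] /\ inord j.-1 \notin Peak u.
Proof.
rewrite !in_Peak in_setC0 => /andP[/andP[j_gt1 asc_j'] _]; split.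
  rewrite inord_pred; lia.
by rewrite asc_j' andbF.
Qed.

Lemma dominant_collision u i j : 0 < i -> i < j ->
  dominant u i = dominant u j -> j \in Peak u /\ i = inord j.-1.
Proof.
move=> i_gt0 lt_ij; have j_gt0 : 0 < j by apply: ltn_trans lt_ij.
rewrite /dominant in_Peak; case: ifP => asc_i; case: ifPn => asc_j;
  move=> /[dup] eq_d /(congr1 val); rewrite /= ?inord_pred //; try lia.
by move=> e_ij; rewrite -eq_d asc_i andbT; split=> //; lia.
Qed.

Lemma dominant_inj u (A : {set 'I_m.+1}) : A \subset [set~ ord0] ->
  {in Peak u, forall j, inord j.-1 \in A -> j \notin A} ->
  {in A &, injective (dominant u)}.
Proof.
move=> /subsetP A_gt0 no_pair i j Ai Aj.
wlog lt_ij : i j Ai Aj / i < j.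
  move=> sym eq_d; case: (ltngtP i j) => [lt_ij|gt_ij|/val_inj//].
    exact: sym eq_d.
  by move: eq_d => /esym/(sym j i Aj Ai gt_ij)->.
have i_gt0 : 0 < i by rewrite -in_setC0 A_gt0.
by move=> /dominant_collision[] // Pj e_ij; have := no_pair j Pj; rewrite -e_ij Ai Aj => /(_ isT).
Qed.

Lemma in_shift1 J i : (i \in shift1 J) = (0 < i) && (inord i.-1 \in J).
Proof.
rewrite inE; apply/existsP/andP => [[j /andP[Jj /eqP ->]] | [i_gt0 Ji]].
  by rewrite inord_val.
by exists (inord i.-1); rewrite Ji /= inord_pred ?prednK.
Qed.

Lemma Peak_inF u : inF (Peak u).
Proof.
apply/andP; split; apply/forallP => i; apply/implyP; rewrite in_Peak.
  by case/andP => /andP[-> _] _; rewrite /= -ltnS.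
case/andP => _ desc_i; apply/forallP => j; apply/implyP; rewrite in_Peak.
case/andP => /andP[_ asc_j] _; apply/negP => /eqP e_ji.
by move: asc_j; rewrite e_ji /= inord_val (negbTE desc_i).
Qed.

Lemma sum_Pring_Peak u (P : pred {set 'I_m.+1}) (c : {set 'I_m.+1} -> nat) :
  (\sum_(F : {set 'I_m.+1} | inF F && P F) Posz (c F) * Pring F u)%R
  = if P (Peak u) then Posz (c (Peak u)) else 0.
Proof.
rewrite /Pring; case: ifP => PP.
  rewrite (bigD1 (Peak u)) /=; last by rewrite Peak_inF PP.
  rewrite big1 ?addr0 => [|F /andP[_ /negbTE nF]]; first by rewrite ffunE eqxx mulr1.
  by rewrite ffunE eq_sym nF mulr0.
rewrite big1 // => F /andP[_ PF]; rewrite ffunE.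
by case: eqP => [e|]; [rewrite -e PP in PF | rewrite mulr0].
Qed.

Lemma phiE (X : {ffun sperm m.+1 -> int}) u :
  phi X u = (\sum_s X (u, s))%R.
Proof.
have abs_wval (w : sperm m.+1) i : `|wval w i|%R = (w.1 i).+1.
  by rewrite /wval; case: (w.2 i); rewrite ?mulN1r ?mul1r ?normrN.
rewrite ffunE (eq_bigl (fun w : sperm m.+1 => (w.1 == u) && true)) => [|w]; last first.
  rewrite andbT; apply/forallP/eqP => [abs_eq | <- i]; last by rewrite abs_wval.
  by apply/permP => i; apply: val_inj; move/eqP: (abs_eq i); rewrite abs_wval => -[].
transitivity (\sum_(w : sperm m.+1 | (w.1 == u) && true) X (w.1, w.2))%R.
  by apply: eq_bigr => -[].
by rewrite -(pair_big_dep (pred1 u) (fun _ _ => true) (fun p s => X (p, s))) big_pred1_eq.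
Qed.

Lemma setZE J : setZ J = ord0 |: J.
Proof. by apply/setP => i; rewrite !inE -(inj_eq val_inj). Qed.

Lemma X0E J u s : X0 J ((u, s) : sperm m.+1) =
  Posz (s \in prescribed ([set~ ord0] :\: J) (dominant u) (fun i => ~~ ascent u i)).
Proof.
rewrite /X0 /Xset setZE ffunE inE; congr (Posz (nat_of_bool _)).
apply/subsetP/forallP => [DJ i | sP i Di].
  apply/implyP; rewrite in_setD in_setC0 => /andP[NJi i_gt0].
  have: i \notin Des ((u, s) : sperm m.+1).
    by apply: contra NJi => /DJ; rewrite in_setU1 -(inj_eq val_inj) eqn0Ngt i_gt0.
  by rewrite in_Des //; case: (s _); case: (ascent u i).
rewrite in_setU1 -(inj_eq val_inj) eqn0Ngt; case: (posnP i) => //= i_gt0.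
apply/contraT => NJi; have /implyP := sP i; rewrite in_setD in_setC0 NJi i_gt0 => /(_ isT).
by move: Di; rewrite in_Des //; case: (s _); case: (ascent u i).
Qed.

Lemma Y0E J u s : ord0 \notin J -> Y0 J ((u, s) : sperm m.+1) =
  Posz (s \in prescribed [set~ ord0] (dominant u) (fun i => ascent u i == (i \in J))).
Proof.
move=> NJ0; rewrite /Y0 /Yset !ffunE -PoszD inE; congr Posz.
rewrite setZE eq_setU1_add //; congr nat_of_bool; apply/eqP/forallP => [DJ i | sP].
  apply/implyP; rewrite in_setC0 => i_gt0.
  have: (i \in Des ((u, s) : sperm m.+1) :\ ord0) = (i \in J) by rewrite DJ.
  rewrite in_setD1 in_Des // -(inj_eq val_inj) -lt0n i_gt0 /=.
  by case: (s _); case: (ascent u i); case: (i \in J) => // -[].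
apply/setP => i; rewrite in_setD1 -(inj_eq val_inj) -lt0n; case: (posnP i) => /= [i0|i_gt0].
  by apply/esym/negbTE; apply: contra NJ0; have ->: i = ord0 by apply: val_inj.
have /implyP := sP i; rewrite in_setC0 in_Des // => /(_ i_gt0).
by case: (s _); case: (ascent u i); case: (i \in J).
Qed.

Lemma phi_X0 J u : J \subset [set~ ord0] ->
  phi (X0 J) u = if Peak u \subset J :|: shift1 J then Posz (2 ^ (1 + #|J|)) else 0.
Proof.
move=> J_gt0; rewrite phiE; under eq_bigr do rewrite X0E; rewrite sum_indicator.
set C := [set~ ord0] :\: J.
case: ifP => [PJ | /negbT/subsetPn[j Pj NJSj]].
  have inj : {in C &, injective (dominant u)}.
    apply: dominant_inj => [|j Pj]; first exact: subsetDl.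
    rewrite !in_setD => /andP[NJj' _]; apply/negP => /andP[NJj _].
    by have := subsetP PJ j Pj; rewrite in_setU in_shift1 (negbTE NJj) (negbTE NJj') andbF.
  rewrite card_prescribed => [|i k Ci Ck /inj-> //].
  rewrite cardsCs setCK card_in_imset // cardsD (setIidPr J_gt0) cardsC1 card_ord.
  have := subset_leq_card J_gt0; rewrite cardsC1 card_ord => le_Jm.
  by congr (Posz (2 ^ _)); move: #|J| le_Jm; lia.
have [Pj'0 _] := Peak_pred Pj; move: (Pj) (NJSj); rewrite in_Peak in_setU in_shift1 negb_or.
move=> /andP[/andP[j_gt1 asc_j'] desc_j] /andP[NJj /nandP[/negP|NJj']].
  by rewrite (ltn_trans _ j_gt1).
rewrite (card_prescribed_eq0 (k := inord j.-1) (k' := j)) ?dominant_peak //.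
- by rewrite in_setD NJj' Pj'0.
- by rewrite in_setD NJj (subsetP (Peak_subC0 u)).
- by rewrite asc_j' desc_j.
Qed.

Lemma phi_Y0 J u : J \subset [set~ ord0] ->
  phi (Y0 J) u = if Peak u \subset symdiff J (shift1 J)
                 then Posz (2 ^ (1 + #|Peak u|)) else 0.
Proof.
move=> J_gt0; have NJ0 : ord0 \notin J by apply/negP => /(subsetP J_gt0); rewrite in_setC0.
rewrite phiE; under eq_bigr do rewrite Y0E //; rewrite sum_indicator.
have in_symdiff i : (i \in symdiff J (shift1 J)) = ((i \in J) != (i \in shift1 J)).
  by rewrite /symdiff in_setU !in_setD; case: (i \in J); case: (i \in shift1 J).
case: ifP => [PS | /negbT/subsetPn[j Pj NSj]].
  rewrite card_prescribed => [|i k Ci Ck]; last first.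
    wlog lt_ik : i k Ci Ck / i < k.
      move=> sym eq_d; case: (ltngtP i k) => [lt_ik|gt_ik|/val_inj-> //].
        exact: sym eq_d.
      by move: eq_d => /esym/(sym k i Ck Ci gt_ik)->.
    move/dominant_collision; rewrite -in_setC0 => /(_ Ci lt_ik) [Pk ->].
    have := subsetP PS k Pk; move: Pk; rewrite in_Peak in_symdiff in_shift1 -in_setC0 Ck.
    by case/andP=> /andP[_ ->] /negbTE->; case: (_ \in J); case: (_ \in J).
  have img : dominant u @: [set~ ord0] = dominant u @: ([set~ ord0] :\: Peak u).
    apply/eqP; rewrite eqEsubset (imsetS _ (subsetDl _ _)) andbT.
    apply/subsetP => _ /imsetP[i Ci ->]; case: (boolP (i \in Peak u)) => Pi.
      by have [Pi'0 NPi'] := Peak_pred Pi; rewrite -dominant_peak // imset_f // in_setD NPi'.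
    by rewrite imset_f // in_setD Pi.
  have inj : {in [set~ ord0] :\: Peak u &, injective (dominant u)}.
    by apply: dominant_inj => [|j Pj _]; rewrite ?subsetDl // in_setD Pj.
  rewrite cardsCs setCK img card_in_imset // cardsD (setIidPr (Peak_subC0 u)) cardsC1 card_ord.
  have := subset_leq_card (Peak_subC0 u); rewrite cardsC1 card_ord => le_Pm.
  by congr (Posz (2 ^ _)); move: #|Peak u| le_Pm; lia.
have [Pj'0 _] := Peak_pred Pj; move: (Pj) (NSj); rewrite in_Peak in_symdiff in_shift1.
move=> /andP[/andP[j_gt1 asc_j'] desc_j]; rewrite (ltn_trans _ j_gt1) //= negbK => /eqP eqJ.
rewrite (card_prescribed_eq0 (k := inord j.-1) (k' := j)) ?dominant_peak //.
- by rewrite (subsetP (Peak_subC0 u)).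
- by rewrite asc_j' (negbTE desc_j) -eqJ; case: (j \in J).
Qed.

End SignedPermutations.

Local Open Scope ring_scope.

Theorem proposition5p8 (n : nat) (hn : (0 < n)%N) (J : {set 'I_n})
  (hJ : forall i : 'I_n, i \in J -> (0 < val i)%N) :
  (forall u : 'S_n, phi (X0 J) u =
    \sum_(F : {set 'I_n} | inF F && (F \subset J :|: shift1 J))
       (2 ^ (1 + #|J|))%:Z * Pring F u)
  /\
  (forall u : 'S_n, phi (Y0 J) u =
    \sum_(F : {set 'I_n} | inF F && (F \subset symdiff J (shift1 J)))
       (2 ^ (1 + #|F|))%:Z * Pring F u).
Proof.
case: n hn J hJ => // m _ J hJ.
have J_gt0 : J \subset [set~ ord0] by apply/subsetP => i /hJ; rewrite in_setC0.
split=> u.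
  rewrite (sum_Pring_Peak u (fun F => F \subset J :|: shift1 J) (fun=> 2 ^ (1 + #|J|))%N).
  exact: phi_X0.
rewrite (sum_Pring_Peak u (fun F => F \subset symdiff J (shift1 J)) (fun F => 2 ^ (1 + #|F|))%N).
exact: phi_Y0.
Qed.
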